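(* Let $t\ge 0$ and $p_0\in\operatorname{dom}V$. Then the direction $d(p_0;t,b)$ is the unique solution of the cone projection problem \[ \min_{d\in\mathbb{R}^m}\|d+(b+tp_0)\|_2^2\quad\text{subject to}\quad D_{\mathcal E(p_0)}(p_0)A_{\mathcal E(p_0)}^\top d\ge 0 . \] Moreover, if $\hat u\in\mathbb{R}^n$ is a solution of the nonnegative least-squares problem \[ \min_{u\in\mathbb{R}^n}\|A D(p_0)u-(b+tp_0)\|_2^2\quad\text{subject to}\quad u_{\mathcal E(p_0)}\ge 0,\ u_{\mathcal E^{\mathsf C}(p_0)}=0, \] then $d(p_0;t,b)=A_{\mathcal E(p_0)}D_{\mathcal E(p_0)}(p_0)\hat u_{\mathcal E(p_0)}-(b+tp_0)$, and \[ \hat u_j\,[D(p_0)A^\top d(p_0;t,b)]_j=0\ \text{ for every } j\in\{1,\dots,n\},\qquad \|d(p_0;t,b)\|_2^2+\langle b+tp_0,d(p_0;t,b)\rangle=0 . \]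
   Context: Standing setting: $m\le n$ are positive integers, $A\in\mathbb{R}^{m\times n}$ has rank $m$, and $b\in\mathbb{R}^m\setminus\{0\}$; $e_j$ is the $j$-th standard basis vector of $\mathbb{R}^n$. For $t\ge0$ define $V(p;t,b)=\frac t2\|p\|_2^2+\langle p,b\rangle+\chi(-A^\top p)$, where $\chi(s)=0$ if $\|s\|_\infty\le 1$ and $\chi(s)=+\infty$ otherwise; $\operatorname{dom}V=\{p\in\mathbb{R}^m:\|A^\top p\|_\infty\le 1\}$. For $p\in\mathbb{R}^m$, the equicorrelation set is $\mathcal E(p)=\{j:|\langle A^\top p,e_j\rangle|=1\}$, $\mathcal E^{\mathsf C}(p)$ is its complement in $\{1,\dots,n\}$, and $D(p)=\operatorname{diag}(\operatorname{sgn}(-A^\top p))$ (with $\operatorname{sgn}(0)=0$). For an index set $\mathcal E$, $A_{\mathcal E}$ is the submatrix of $A$ with columns indexed by $\mathcal E$, $D_{\mathcal E}(p)$ is the principal submatrix of $D(p)$ with rows and columns indexed by $\mathcal E$, and $u_{\mathcal E}$ is the subvector of $u$ indexed by $\mathcal E$; vector inequalities are componentwise. For $p\in\operatorname{dom}V$, the subdifferential of $V(\cdot;t,b)$ at $p$ is the nonempty closed convex set $\partial_pV(p;t,b)=\{tp+b-\sum_{j\in\mathcal E(p)}u_jAD(p)e_j:\ u_j\ge0\}$, and $d(p;t,b):=-\operatorname{proj}_{\partial_pV(p;t,b)}(0)$, i.e. minus the element of $\partial_pV(p;t,b)$ of smallest Euclidean norm. *)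

From HB Require Import structures.
From mathcomp Require Import all_boot all_order all_algebra.
From mathcomp Require Import boolp classical_sets reals.
Set Implicit Arguments. Unset Strict Implicit. Unset Printing Implicit Defensive.
Import Order.TTheory GRing.Theory Num.Theory.
Local Open Scope ring_scope.
Local Open Scope classical_set_scope.

Section Defs.
Variables (R : realType) (m n : nat) (A : 'M[R]_(m, n)).

Definition dotv k (u v : 'cV[R]_k) : R := \sum_(i < k) u i 0 * v i 0.
Definition norm2 k (u : 'cV[R]_k) : R := dotv u u.


Definition domV (p : 'cV[R]_m) : Prop := forall j : 'I_n, `|(A^T *m p) j 0| <= 1.

Definition Eset (p : 'cV[R]_m) : {set 'I_n} :=
  [set j : 'I_n | `|(A^T *m p) j 0| == 1].

Definition Dmx (p : 'cV[R]_m) : 'M[R]_n :=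
  diag_mx (\row_(j < n) Num.sg (- (A^T *m p) j 0)).

(* subdifferential of V(.;t,b) at p *)
Definition subdiff (t : R) (b p : 'cV[R]_m) : set 'cV[R]_m :=
  [set x | exists u : 'cV[R]_n, (forall j, j \in Eset p -> 0 <= u j 0) /\
     x = t *: p + b - \sum_(j in Eset p) u j 0 *: (A *m Dmx p *m delta_mx j 0)].

Definition is_min_norm_elem (S : set 'cV[R]_m) (x : 'cV[R]_m) : Prop :=
  S x /\ forall y, S y -> norm2 x <= norm2 y.

Definition dir (t : R) (b p : 'cV[R]_m) : 'cV[R]_m :=
  - xget 0 (is_min_norm_elem (subdiff t b p)).

End Defs.

From HB Require Import structures.
From mathcomp Require Import all_boot all_order all_algebra.
From mathcomp Require Import boolp classical_sets reals.
From mathcomp Require Import ring lra zify.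
Import Order.TTheory GRing.Theory Num.Theory.
Set Implicit Arguments. Unset Strict Implicit. Unset Printing Implicit Defensive.
Local Open Scope ring_scope.

(* Write M = A D(p0) and c = b + t p0. The subdifferential at p0 is the convex set
   {c - M w : w >= 0 on E(p0), w = 0 off E(p0)}, so its element of least norm is unique
   and equals c - M u for any solution u of the nonnegative least-squares problem
   min ||M u - c||. A solution exists: starting from any feasible u, an active-set
   descent (unconstrained least squares on the support of u, then a step back to the
   boundary of the orthant, which shrinks the support) reaches a feasible vector that is
   least-squares optimal on its support, and there are finitely many supports.
   The first-order conditions M^T (M u - c) >= 0 on E(p0) and <u, M^T (M u - c)> = 0 say
   that d = M u - c lies in the cone {D A^T y >= 0 on E(p0)} and that
   ||y + c||^2 >= ||M u||^2 + ||y - d||^2 on that cone, so d is the projection. *)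

Section InnerProduct.
Variables (R : realType) (k : nat).
Implicit Types (u v w : 'cV[R]_k) (a s : R).

Lemma dotvC u v : dotv u v = dotv v u.
Proof. by apply: eq_bigr => i _; rewrite mulrC. Qed.

Lemma dotvDl u v w : dotv (u + v) w = dotv u w + dotv v w.
Proof. by rewrite /dotv -big_split; apply: eq_bigr => i _; rewrite !mxE mulrDl. Qed.

Lemma dotvZl a u w : dotv (a *: u) w = a * dotv u w.
Proof. by rewrite /dotv mulr_sumr; apply: eq_bigr => i _; rewrite !mxE mulrA. Qed.

Lemma dotvNl u w : dotv (- u) w = - dotv u w.
Proof. by rewrite -scaleN1r dotvZl mulN1r. Qed.

Lemma dotvBl u v w : dotv (u - v) w = dotv u w - dotv v w.
Proof. by rewrite dotvDl dotvNl. Qed.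

Lemma dotvDr u v w : dotv w (u + v) = dotv w u + dotv w v.
Proof. by rewrite dotvC dotvDl !(dotvC w). Qed.

Lemma dotvZr a u w : dotv w (a *: u) = a * dotv w u.
Proof. by rewrite dotvC dotvZl dotvC. Qed.

Lemma dotv_delta (j : 'I_k) v : dotv (delta_mx j 0) v = v j 0.
Proof.
rewrite /dotv (bigD1 j) //= big1 ?addr0; first by rewrite mxE !eqxx mul1r.
by move=> i /negbTE neq_ij; rewrite mxE neq_ij mul0r.
Qed.

Lemma norm2D u v : norm2 (u + v) = norm2 u + 2 * dotv u v + norm2 v.
Proof. rewrite /norm2 dotvDl !dotvDr (dotvC v u); ring. Qed.

Lemma norm2Z a u : norm2 (a *: u) = a ^+ 2 * norm2 u.
Proof. rewrite /norm2 dotvZl dotvZr; ring. Qed.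

Lemma norm2N u : norm2 (- u) = norm2 u.
Proof. by rewrite /norm2 dotvNl dotvC dotvNl opprK. Qed.

Lemma norm2_ge0 u : 0 <= norm2 u.
Proof. by apply: sumr_ge0 => i _; rewrite -expr2 sqr_ge0. Qed.

Lemma norm2_le0 u : norm2 u <= 0 -> u = 0.
Proof.
move=> u_le0; have u_eq0 : norm2 u = 0 by apply/eqP; rewrite eq_le u_le0 norm2_ge0.
apply/matrixP => i j; rewrite (ord1 j) mxE.
have sq_ge0 l : xpredT l -> 0 <= u l 0 * u l 0 by rewrite -expr2 sqr_ge0.
have := @psumr_eq0P _ _ xpredT _ sq_ge0 u_eq0 i isT.
by move/eqP; rewrite mulf_eq0 orbb => /eqP.
Qed.

Lemma norm2_segment s u v :
  norm2 (u + s *: (v - u)) = (1 - s) * norm2 u + s * norm2 v - s * (1 - s) * norm2 (v - u).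
Proof.
have -> : norm2 v = norm2 u + 2 * dotv u (v - u) + norm2 (v - u).
  by rewrite -norm2D addrC subrK.
rewrite norm2D dotvZr norm2Z; ring.
Qed.

Lemma norm2_segment_le s u v : 0 <= s <= 1 ->
  norm2 (u + s *: (v - u)) <= (1 - s) * norm2 u + s * norm2 v.
Proof.
case/andP=> s_ge0 s_le1; rewrite norm2_segment lerBlDr lerDl.
by rewrite !mulr_ge0 ?norm2_ge0 ?subr_ge0.
Qed.

End InnerProduct.

Lemma dotv_mulmx (R : realType) k l (N : 'M[R]_(k, l)) w r :
  dotv (N *m w) r = dotv w (N^T *m r).
Proof.
have dotvE q (x y : 'cV[R]_q) : dotv x y = (x^T *m y) 0 0.
  by rewrite !mxE; apply: eq_bigr => i _; rewrite !mxE.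
by rewrite !dotvE trmx_mul !mulmxA.
Qed.

Lemma sum_delta_mx_coord (R : realType) k (F : {set 'I_k}) (u : 'cV[R]_k) i :
  (\sum_(j in F) u j 0 *: delta_mx j 0 : 'cV[R]_k) i 0 = if i \in F then u i 0 else 0.
Proof.
rewrite summxE; case: ifP => iF.
  rewrite (bigD1 i) //= big1 ?addr0; first by rewrite !mxE !eqxx mulr1.
  by move=> j /andP [_ neq_ji]; rewrite !mxE eq_sym (negbTE neq_ji) mulr0.
apply: big1 => j jF; rewrite !mxE.
have -> : (i == j) = false by apply: contraFF iF => /eqP ->.
by rewrite mulr0.
Qed.

Lemma mulmx_sum_delta (R : realType) k l (F : {set 'I_l}) (N : 'M[R]_(k, l))
    (u : 'cV[R]_l) :
  \sum_(j in F) u j 0 *: (N *m delta_mx j 0)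
  = N *m \sum_(j in F) u j 0 *: (delta_mx j 0 : 'cV[R]_l).
Proof. by rewrite mulmx_sumr; apply: eq_bigr => j _; rewrite scalemxAr. Qed.

Lemma quadratic_ge0_slope_ge0 (R : realType) (a b : R) : 0 <= b ->
  (forall s, 0 < s -> s <= 1 -> 0 <= 2 * s * a + s ^+ 2 * b) -> 0 <= a.
Proof.
move=> b_ge0 q_ge0; rewrite leNgt; apply/negP => a_lt0.
have den_gt0 : 0 < b - a by lra.
(* At s = -a / (b - a) the quadratic equals s a (1 + s) < 0. *)
set s := - a / (b - a).
have s_den : s * (b - a) = - a by rewrite /s mulfVK // gt_eqF.
have s_gt0 : 0 < s by rewrite /s divr_gt0 // oppr_gt0.
have s_le1 : s <= 1 by rewrite /s ler_pdivrMr // mul1r; lra.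
have := q_ge0 s s_gt0 s_le1; nra.
Qed.

Section MinNormElement.
Variables (R : realType) (k : nat) (S : set 'cV[R]_k).
Hypothesis S_midpoint : forall x y, S x -> S y -> S (x + 2^-1 *: (y - x)).

Lemma min_norm_elem_unique x y :
  is_min_norm_elem S x -> is_min_norm_elem S y -> x = y.
Proof.
move=> [Sx x_min] [Sy y_min].
have := x_min _ (S_midpoint Sx Sy); rewrite norm2_segment.
have := y_min _ Sx; have := norm2_ge0 (y - x) => d_ge0 yx xmid.
have : norm2 (y - x) <= 0 by lra.
by move/norm2_le0/eqP; rewrite subr_eq0 => /eqP.
Qed.

Lemma xget_min_norm_elem x :
  is_min_norm_elem S x -> xget 0 (is_min_norm_elem S) = x.
Proof.
move=> x_min; apply: (xget_unique _ x_min) => y y_min.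
exact: min_norm_elem_unique y_min x_min.
Qed.

End MinNormElement.

Section LeastSquares.
Variable R : realType.

Lemma mulmx_trmx_eq0 k l (Y : 'M[R]_(k, l)) : Y *m Y^T = 0 -> Y = 0.
Proof.
move=> YYt0; apply/matrixP => i j; rewrite mxE.
have : (Y *m Y^T) i i = 0 by rewrite YYt0 mxE.
rewrite mxE => sum0.
have sq_ge0 j' : xpredT j' -> 0 <= Y i j' * Y^T j' i by rewrite mxE -expr2 sqr_ge0.
have := @psumr_eq0P _ _ xpredT _ sq_ge0 sum0 j isT.
by rewrite mxE => /eqP; rewrite mulf_eq0 orbb => /eqP.
Qed.

Lemma mxrank_trmx_mulmx k l (N : 'M[R]_(k, l)) : \rank (N^T *m N) = \rank N.
Proof.
apply/eqP; rewrite eqn_leq mxrankM_maxr /=.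
rewrite -(mxrank_tr N); set X := N^T.
have -> : N^T *m N = X *m X^T by rewrite /X trmxK.
have ker_sub : (kermx (X *m X^T) <= kermx X)%MS.
  rewrite sub_kermx; apply/eqP/mulmx_trmx_eq0.
  by rewrite trmx_mul !mulmxA -(mulmxA _ X) mulmx_ker mul0mx.
have := mxrankS ker_sub; rewrite !mxrank_ker.
have := rank_leq_row X; have := rank_leq_row (X *m X^T).
lia.
Qed.

Lemma normal_equations_solvable k l (N : 'M[R]_(k, l)) (c : 'cV[R]_k) :
  exists x, N^T *m (N *m x - c) = 0.
Proof.
have N_sub : (N <= N^T *m N)%MS.
  by have [_ <-] := mxrank_leqif_sup (submxMl N^T N); rewrite mxrank_trmx_mulmx.
have /submxP [D cN] : (c^T *m N <= N^T *m N)%MS by apply: submx_trans (submxMl _ _) N_sub.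
exists D^T.
rewrite mulmxBr mulmxA -[N^T *m N]trmxK trmx_mul trmxK -trmx_mul -cN.
by rewrite trmx_mul trmxK subrr.
Qed.

Lemma normal_equations_min k l (N : 'M[R]_(k, l)) (c : 'cV[R]_k) x y :
  N^T *m (N *m x - c) = 0 -> norm2 (N *m x - c) <= norm2 (N *m y - c).
Proof.
move=> normal_eq.
have -> : N *m y - c = (N *m x - c) + N *m (y - x) by rewrite mulmxBr [RHS]addrC addrA subrK.
have orth : dotv (N *m x - c) (N *m (y - x)) = 0.
  by rewrite dotvC dotv_mulmx normal_eq /dotv big1 // => i _; rewrite !mxE mulr0.
by rewrite [X in _ <= X]norm2D orth mulr0 addr0 lerDl norm2_ge0.
Qed.

End LeastSquares.

Section NNLS.
Variables (R : realType) (m n : nat) (M : 'M[R]_(m, n)) (E : {set 'I_n}) (c : 'cV[R]_m).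
Implicit Types (u v w l : 'cV[R]_n) (F : {set 'I_n}).

Definition supported_in F u := forall j, j \notin F -> u j 0 = 0.
Definition supp u := [set j | u j 0 != 0].
Definition nnls_feasible u := (forall j, j \in E -> 0 <= u j 0) /\ supported_in E u.
Definition nnls_obj u := norm2 (M *m u - c).
Definition nnls_solution u :=
  nnls_feasible u /\ forall v, nnls_feasible v -> nnls_obj u <= nnls_obj v.
Definition optimal_on F u :=
  supported_in F u /\ forall v, supported_in F v -> nnls_obj u <= nnls_obj v.
Definition nnls_grad u := M^T *m (M *m u - c).
Definition dual_cone (y : 'cV[R]_m) := forall j, j \in E -> 0 <= (M^T *m y) j 0.

Lemma supported_in_supp u : supported_in (supp u) u.
Proof. by move=> j; rewrite inE negbK => /eqP. Qed.

Lemma supp_feasible u j : nnls_feasible u -> j \in supp u -> j \in E.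
Proof. by move=> [_ u_supp]; rewrite inE; apply: contraR => /u_supp ->. Qed.

Lemma sum_delta_mx_supported F u :
  supported_in F u -> \sum_(j in F) u j 0 *: delta_mx j 0 = u.
Proof.
move=> u_supp; apply/matrixP => i j; rewrite (ord1 j) sum_delta_mx_coord.
by case: ifP => // /negbT /u_supp ->.
Qed.

Lemma nnls_feasible_segment u v s : nnls_feasible u -> nnls_feasible v -> 0 <= s <= 1 ->
  nnls_feasible (u + s *: (v - u)).
Proof.
move=> [u_ge0 u_supp] [v_ge0 v_supp] /andP [s_ge0 s_le1]; split=> j j_E; rewrite !mxE.
  by have := u_ge0 j j_E; have := v_ge0 j j_E; nra.
by rewrite u_supp // v_supp // subrr mulr0 addr0.
Qed.

Lemma nnls_feasible_mul_ge0 u (g : 'cV[R]_n) j : nnls_feasible u ->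
  (forall j, j \in E -> 0 <= g j 0) -> 0 <= u j 0 * g j 0.
Proof.
move=> [u_ge0 u_supp] g_ge0; have [j_E | j_notE] := boolP (j \in E).
  by rewrite mulr_ge0 ?u_ge0 ?g_ge0.
by rewrite u_supp // mul0r.
Qed.

Lemma nnls_feasible_dotv_ge0 u (g : 'cV[R]_n) : nnls_feasible u ->
  (forall j, j \in E -> 0 <= g j 0) -> 0 <= dotv u g.
Proof. by move=> u_feas g_ge0; apply: sumr_ge0 => j _; apply: nnls_feasible_mul_ge0. Qed.

Lemma exists_optimal_on F : exists l, optimal_on F l.
Proof.
pose P : 'M[R]_n := diag_mx (\row_j (j \in F)%:R).
have P_id v : supported_in F v -> P *m v = v.
  move=> v_supp; apply/matrixP => i j; rewrite (ord1 j) /P mul_diag_mx !mxE.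
  by have [iF | /v_supp ->] := boolP (i \in F); rewrite ?iF ?mul1r ?mulr0.
have [x normal_eq] := normal_equations_solvable (M *m P) c.
exists (P *m x); split.
  by move=> j j_notF; rewrite /P mul_diag_mx !mxE (negbTE j_notF) mul0r.
move=> v v_supp; rewrite /nnls_obj mulmxA.
have := normal_equations_min v normal_eq.
by rewrite -[M *m P *m v]mulmxA (P_id v v_supp).
Qed.

Lemma nnls_obj_segment_le u l s : 0 <= s -> s <= 1 ->
  nnls_obj (u + s *: (l - u)) <= (1 - s) * nnls_obj u + s * nnls_obj l.
Proof.
move=> s_ge0 s_le1; rewrite /nnls_obj mulmxDr -scalemxAr mulmxBr.
have -> : M *m l - M *m u = (M *m l - c) - (M *m u - c) by rewrite opprB addrA subrK.
by rewrite addrAC norm2_segment_le // s_ge0 s_le1.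
Qed.

Lemma nnls_descent_step u l : nnls_feasible u -> optimal_on (supp u) l ->
  (exists j, l j 0 < 0) ->
  exists w, [/\ nnls_feasible w, supp w \proper supp u & nnls_obj w <= nnls_obj u].
Proof.
move=> u_feas [l_supp l_opt] [j1 lj1_lt0].
have [u_ge0 u_supp] := u_feas.
have neg_supp j : l j 0 < 0 -> j \in supp u.
  by apply: contraTT => /l_supp ->; rewrite ltxx.
(* The step s is the largest one keeping u + s (l - u) nonnegative; it zeroes the coordinate j0. *)
pose ratio j := u j 0 / (u j 0 - l j 0).
case: (@arg_minP _ _ _ j1 (fun j => l j 0 < 0) ratio lj1_lt0) => j0 lj0_lt0 ratio_min.
set s := ratio j0.
have j0_supp := neg_supp j0 lj0_lt0.
have uj0_ge0 := u_ge0 j0 (supp_feasible u_feas j0_supp).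
have den_gt0 : 0 < u j0 0 - l j0 0 by lra.
have s_den : s * (u j0 0 - l j0 0) = u j0 0 by rewrite mulfVK // gt_eqF.
have s_ge0 : 0 <= s by rewrite divr_ge0 // ltW.
have s_le1 : s <= 1 by rewrite ler_pdivrMr // mul1r; lra.
pose w := u + s *: (l - u).
have wE j : w j 0 = u j 0 + s * (l j 0 - u j 0) by rewrite !mxE.
have w_supp : supported_in (supp u) w.
  by move=> j j_notsupp; rewrite wE supported_in_supp // l_supp // subrr mulr0 addr0.
exists w; split.
- split=> [j j_E|j j_notE]; last first.
    by apply: w_supp; apply: contra j_notE; apply: supp_feasible.
  have uj_ge0 := u_ge0 j j_E; rewrite wE.
  have [lj_ge0 | lj_lt0] := leP 0 (l j 0); first by nra.
  have := ratio_min j lj_lt0; rewrite -/s /ratio ler_pdivlMr; nra.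
- apply/properP; split.
    by apply/fintype.subsetP => j; apply: contraLR => /w_supp wj0; rewrite inE wj0 eqxx.
  by exists j0 => //; rewrite inE negbK wE; apply/eqP; lra.
- have l_le_u := l_opt u (@supported_in_supp u).
  have := nnls_obj_segment_le u l s_ge0 s_le1; nra.
Qed.

Lemma nnls_descent u : nnls_feasible u ->
  exists F v, [/\ nnls_feasible v, optimal_on F v & nnls_obj v <= nnls_obj u].
Proof.
move: {2}#|supp u|.+1 (ltnSn #|supp u|) => N; elim: N u => // N IH u card_u u_feas.
have [l l_opt] := exists_optimal_on (supp u).
have l_le_u := l_opt.2 u (@supported_in_supp u).
have [/existsP neg | /existsPn nonneg] := boolP [exists j, l j 0 < 0].
  have [w [w_feas w_proper w_le]] := nnls_descent_step u_feas l_opt neg.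
  have card_w : (#|supp w| < N)%N by have := proper_card w_proper; lia.
  have [F [v [v_feas v_opt v_le]]] := IH w card_w w_feas.
  by exists F, v; split=> //; apply: le_trans v_le w_le.
exists (supp u), l; split=> //; split=> [j _|j j_notE].
  by rewrite leNgt nonneg.
by apply: l_opt.1; apply: contra j_notE; apply: supp_feasible.
Qed.

Lemma nnls_solution_exists : exists u, nnls_solution u.
Proof.
pose admissible F := exists v, nnls_feasible v /\ optimal_on F v.
pose cand F := xget 0 (fun v => nnls_feasible v /\ optimal_on F v).
have zero_feas : nnls_feasible 0 by split=> j _; rewrite mxE.
have [F0 [v0 [v0_feas v0_opt _]]] := nnls_descent zero_feas.
have F0_adm : `[< admissible F0 >] by apply/asboolP; exists v0.
case: (@arg_minP _ _ _ F0 (fun F => `[< admissible F >]) (nnls_obj \o cand) F0_adm).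
move=> F1 /asboolP F1_adm F1_min.
have [cand_feas _] := xgetPex 0 F1_adm.
exists (cand F1); split=> // v v_feas.
have [F [w [w_feas w_opt w_le]]] := nnls_descent v_feas.
have F_adm : admissible F by exists w.
have [_ [_ cand_opt]] := xgetPex 0 F_adm.
apply: le_trans (F1_min F (asboolT F_adm)) _.
exact: le_trans (cand_opt w w_opt.1) w_le.
Qed.

Lemma nnls_obj_shift u s v : nnls_obj (u + s *: v) =
  nnls_obj u + 2 * s * dotv v (nnls_grad u) + s ^+ 2 * norm2 (M *m v).
Proof.
rewrite /nnls_obj mulmxDr -scalemxAr addrAC norm2D dotvZr norm2Z.
by rewrite (dotvC (M *m u - c)) dotv_mulmx mulrA.
Qed.

Lemma nnls_kkt u : nnls_solution u ->
  (forall j, j \in E -> 0 <= nnls_grad u j 0) /\ dotv u (nnls_grad u) = 0.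
Proof.
move=> [[u_ge0 u_supp] u_min].
have shift_ge0 s v : nnls_feasible (u + s *: v) ->
    0 <= 2 * s * dotv v (nnls_grad u) + s ^+ 2 * norm2 (M *m v).
  by move=> /u_min; rewrite nnls_obj_shift; lra.
have grad_ge0 j : j \in E -> 0 <= nnls_grad u j 0.
  move=> j_E; apply: (quadratic_ge0_slope_ge0 (norm2_ge0 _)) => s s_gt0 _.
  rewrite -dotv_delta; apply: shift_ge0; split=> i i_E; rewrite !mxE.
    by rewrite addr_ge0 ?u_ge0 // mulr_ge0 ?ler0n // ltW.
  have -> : (i == j) = false by apply: (contraNF _ i_E) => /eqP ->.
  by rewrite u_supp // mulr0 addr0.
have stretch_feas s : -1 <= s -> nnls_feasible (u + s *: u).
  move=> s_ge; split=> i i_E; rewrite !mxE; last by rewrite u_supp // mulr0 addr0.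
  have := u_ge0 i i_E; nra.
have := norm2_ge0 (M *m u) => Mu_ge0.
split=> //; apply/eqP; rewrite eq_le; apply/andP; split.
  rewrite -oppr_ge0; apply: (quadratic_ge0_slope_ge0 Mu_ge0) => s s_gt0 s_le1.
  have shrink_feas : nnls_feasible (u + - s *: u) by apply: stretch_feas; lra.
  by have := shift_ge0 _ _ shrink_feas; rewrite sqrrN; lra.
apply: (quadratic_ge0_slope_ge0 Mu_ge0) => s s_gt0 _.
by apply: shift_ge0; apply: stretch_feas; lra.
Qed.

Lemma nnls_complementarity u j : nnls_solution u -> u j 0 * nnls_grad u j 0 = 0.
Proof.
move=> u_sol; have [grad_ge0 orth] := nnls_kkt u_sol.
have term_ge0 i : xpredT i -> 0 <= u i 0 * nnls_grad u i 0.
  by move=> _; apply: nnls_feasible_mul_ge0 grad_ge0; case: u_sol.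
exact: (@psumr_eq0P _ _ xpredT _ term_ge0 orth j isT).
Qed.

Lemma nnls_dual_cone_pythagoras u y : nnls_solution u -> dual_cone y ->
  norm2 (M *m u) + norm2 (y - (M *m u - c)) <= norm2 (y + c).
Proof.
move=> u_sol y_cone; have [_ orth] := nnls_kkt u_sol.
have y_pos : 0 <= dotv u (M^T *m y).
  by apply: nnls_feasible_dotv_ge0 y_cone; case: u_sol.
have -> : y + c = (y - (M *m u - c)) + M *m u by rewrite opprB addrA subrK.
rewrite [X in _ <= X]norm2D dotvBl (dotvC y) (dotvC (M *m u - c)) !dotv_mulmx -/(nnls_grad u).
rewrite orth subr0; lra.
Qed.

Lemma nnls_dual_cone_projection u x : nnls_solution u ->
  (dual_cone x /\ forall y, dual_cone y -> norm2 (x + c) <= norm2 (y + c))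
  <-> x = M *m u - c.
Proof.
move=> u_sol; have [grad_ge0 _] := nnls_kkt u_sol.
have d_cone : dual_cone (M *m u - c) := grad_ge0.
split=> [[x_cone x_min] | ->].
  have := nnls_dual_cone_pythagoras u_sol x_cone; have := x_min _ d_cone.
  rewrite subrK => le1 le2; have := norm2_ge0 (M *m u).
  have : norm2 (x - (M *m u - c)) <= 0 by lra.
  by move/norm2_le0/eqP; rewrite subr_eq0 => /eqP.
split=> // y y_cone; rewrite subrK.
have := nnls_dual_cone_pythagoras u_sol y_cone.
have := norm2_ge0 (y - (M *m u - c)); lra.
Qed.

End NNLS.

Section Direction.
Variables (R : realType) (m n : nat) (A : 'M[R]_(m, n)) (t : R) (b p0 : 'cV[R]_m).
Local Notation E := (Eset A p0).
Local Notation M := (A *m Dmx A p0).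
Local Notation c := (b + t *: p0).

Lemma subdiff_nnls x :
  subdiff A t b p0 x <-> exists w, nnls_feasible E w /\ x = c - M *m w.
Proof.
split=> [[u [u_ge0 ->]] | [w [[w_ge0 w_supp] ->]]].
  exists (\sum_(j in E) u j 0 *: delta_mx j 0); split.
    by split=> j j_E; rewrite sum_delta_mx_coord ?j_E ?u_ge0 // (negbTE j_E).
  by rewrite mulmx_sum_delta [t *: p0 + b]addrC.
exists w; split=> //.
by rewrite mulmx_sum_delta sum_delta_mx_supported // [t *: p0 + b]addrC.
Qed.

Lemma subdiff_midpoint x y : subdiff A t b p0 x -> subdiff A t b p0 y ->
  subdiff A t b p0 (x + 2^-1 *: (y - x)).
Proof.
move=> /subdiff_nnls [v [v_feas ->]] /subdiff_nnls [w [w_feas ->]].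
apply/subdiff_nnls; exists (v + 2^-1 *: (w - v)); split.
  by apply: nnls_feasible_segment; rewrite // invr_ge0 ler0n invf_le1 ?ler1n.
rewrite mulmxDr -scalemxAr mulmxBr.
by apply/matrixP => i j; rewrite !mxE; ring.
Qed.

Lemma dir_nnls_solution u : nnls_solution M E c u -> dir A t b p0 = M *m u - c.
Proof.
move=> [u_feas u_min]; rewrite /dir (@xget_min_norm_elem _ _ _ _ (c - M *m u)) ?opprB //.
  exact: subdiff_midpoint.
split=> [|y /subdiff_nnls [w [w_feas ->]]]; first by apply/subdiff_nnls; exists u.
by rewrite -(opprB (M *m u)) -(opprB (M *m w)) !norm2N; apply: u_min.
Qed.

End Direction.

Theorem lemma3p3 (R : realType) (m n : nat) (A : 'M[R]_(m, n))
  (b : 'cV[R]_m) (t : R) (p0 : 'cV[R]_m) :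
  (m <= n)%N -> \rank A = m -> b != 0 ->
  0 <= t -> domV A p0 ->
  let c := b + t *: p0 in
  let E := Eset A p0 in
  let D := Dmx A p0 in
  let d := dir A t b p0 in
  let feas (x : 'cV[R]_m) := forall j, j \in E -> 0 <= (D *m A^T *m x) j 0 in
  (* d is the unique solution of the cone projection problem *)
  (forall x : 'cV[R]_m,
     (feas x /\ forall y : 'cV[R]_m, feas y -> norm2 (x + c) <= norm2 (y + c))
     <-> x = d) /\
  (* characterization via any solution of the NNLS problem *)
  (forall uh : 'cV[R]_n,
     ((forall j, j \in E -> 0 <= uh j 0) /\ (forall j, j \notin E -> uh j 0 = 0) /\
      (forall u : 'cV[R]_n,
         (forall j, j \in E -> 0 <= u j 0) -> (forall j, j \notin E -> u j 0 = 0) ->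
         norm2 (A *m D *m uh - c) <= norm2 (A *m D *m u - c))) ->
     d = \sum_(j in E) uh j 0 *: (A *m D *m delta_mx j 0) - c /\
     (forall j : 'I_n, uh j 0 * (D *m A^T *m d) j 0 = 0) /\
     norm2 d + dotv c d = 0).
Proof.
move=> _ _ _ _ _ c E D d feas.
have DAT : D *m A^T = (A *m D)^T by rewrite trmx_mul /D /Dmx tr_diag_mx.
have feas_cone : feas = dual_cone (A *m D) E by apply: funext => x; rewrite /feas DAT.
have [u u_sol] := nnls_solution_exists (A *m D) E c.
split=> [x | uh [uh_ge0 [uh_supp uh_min]]].
  by rewrite feas_cone /d (dir_nnls_solution u_sol); apply: nnls_dual_cone_projection.
have uh_sol : nnls_solution (A *m D) E c uh by split=> // v [v_ge0 v_supp]; apply: uh_min.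
rewrite /d (dir_nnls_solution uh_sol) DAT; split; last split.
- by rewrite mulmx_sum_delta sum_delta_mx_supported.
- by move=> j; apply: nnls_complementarity uh_sol.
- by rewrite /norm2 /c -dotvDl subrK dotv_mulmx; case: (nnls_kkt uh_sol).
Qed.
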